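(* Let $d\ge1$, $\Omega_s<0$, $\mathbf{\Omega}_a\in\mathbb{R}^{d\times d}$ skew-symmetric, $\mathbf{\Omega}=\Omega_s\mathbf{I}+\mathbf{\Omega}_a$, $D>0$, $\Sigma_0>0$, $\mathbf{m}_0\in\mathbb{R}^d$, $T>0$, $\epsilon\ge0$, $\lambda>0$, and let $\hat{\mathbf{D}}\in\mathbb{R}^{d\times d}$ be symmetric. Let $\mathbf{m}_t=e^{\mathbf{\Omega}t}\mathbf{m}_0$ and $\sigma_t^2=\Sigma_0e^{2\Omega_st}+D(e^{2\Omega_st}-1)/\Omega_s$ (so the isotropic Ornstein–Uhlenbeck process $d\mathbf{x}=\mathbf{\Omega}\mathbf{x}dt+\sqrt{2D}d\mathbf{W}$, $\mathbf{x}_0\sim\mathcal{N}(\mathbf{m}_0,\Sigma_0\mathbf{I})$, has marginals $\mathcal{N}(\mathbf{m}_t,\sigma_t^2\mathbf{I})$). Set $\mathbf{P}=\int_0^T\mathbf{m}_t\mathbf{m}_t^Tdt$, with eigendecomposition $\mathbf{P}=\sum_{i=1}^d\gamma_i\mathbf{u}_i\mathbf{u}_i^T$ ($\{\mathbf{u}_i\}$ orthonormal, $\gamma_1\ge\dots\ge\gamma_d\ge0$), and $$q=\int_0^T\frac{\sigma_t^4}{\sqrt{\epsilon^2/16+\sigma_t^4}}dt,\qquad r=\int_0^T\frac{\sigma_t^2}{\sqrt{\epsilon^2/16+\sigma_t^4}}dt.$$ Consider, for $\hat{\mathbf{\Omega}}\in\mathbb{R}^{d\times d}$, $$\mathcal{L}_\epsilon(\hat{\mathbf{\Omega}})=\mathrm{tr}\Big((\hat{\mathbf{\Omega}}-\mathbf{\Omega})^T(\hat{\mathbf{\Omega}}-\mathbf{\Omega})\mathbf{P}+\tfrac{q}{4}(\hat{\mathbf{\Omega}}+\hat{\mathbf{\Omega}}^T-2\Omega_s\mathbf{I})^2+r(\hat{\mathbf{\Omega}}+\hat{\mathbf{\Omega}}^T-2\Omega_s\mathbf{I})(\hat{\mathbf{D}}-D\mathbf{I})+\lambda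 T\hat{\mathbf{\Omega}}\hat{\mathbf{\Omega}}^T\Big).$$ Let $\tilde\lambda=\lambda T$, $\tilde q=q+\tilde\lambda$, $\Gamma_+=\tfrac12(\tilde\lambda^{-1}+\tilde q^{-1})$, $\omega_{ij}=\mathbf{u}_i^T\mathbf{\Omega}_a\mathbf{u}_j$ and $\eta_{ij}=\mathbf{u}_i^T\big(\Omega_s\mathbf{I}+r(\hat{\mathbf{D}}-D\mathbf{I})/\tilde\lambda\big)\mathbf{u}_j$. Then the minimum of $\mathcal{L}_\epsilon$ over $\mathbb{R}^{d\times d}$ is attained at $$\hat{\mathbf{\Omega}}=\mathbf{\Omega}-\sum_{i,j=1}^d\frac{\tilde\lambda\tilde q^{-1}\eta_{ij}(1+\gamma_i\tilde\lambda^{-1})+\omega_{ij}(1+\gamma_i\tilde q^{-1})}{\tilde q^{-1}\tilde\lambda^{-1}\gamma_i\gamma_j+\Gamma_+(\gamma_i+\gamma_j)+1}\,\mathbf{u}_i\mathbf{u}_j^T.$$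
   Context: $\mathcal{L}_\epsilon$ is the continuous-time limit of the regularized Sinkhorn-divergence (entropic regularization $\epsilon$) inference loss for a linear force $\hat{\mathbf{\Omega}}\mathbf{x}$ with assumed diffusion tensor $\hat{\mathbf{D}}$ in this isotropic setting; the claim concerns this explicit function only. *)

From HB Require Import structures.
From mathcomp Require Import all_boot all_order all_algebra.
From mathcomp Require Import all_classical all_reals all_analysis.
Set Implicit Arguments. Unset Strict Implicit. Unset Printing Implicit Defensive.
Import Order.TTheory GRing.Theory Num.Theory.
Import numFieldNormedType.Exports.
Local Open Scope classical_set_scope.
Local Open Scope ring_scope.

Section Defs.
Variables (R : realType) (n : nat).
Notation d := n.+1.
Notation M := 'M[R]_d.

Definition expmx (A : M) : M :=
  limn (fun N : nat => \sum_(k < N) ((k`!)%:R^-1 : R) *: A ^+ k).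

Definition mean (Om : M) (m0 : 'cV[R]_d) (t : R) : 'cV[R]_d :=
  expmx (t *: Om) *m m0.

Definition sigma2 (Oms D Sig0 t : R) : R :=
  Sig0 * expR (2 * Oms * t) + D * (expR (2 * Oms * t) - 1) / Oms.

Definition Pmat (Om : M) (m0 : 'cV[R]_d) (T : R) : M :=
  \matrix_(i, j) Rintegral lebesgue_measure `[0, T]
     (fun t => (mean Om m0 t *m (mean Om m0 t)^T) i j).

Definition qval (Oms D Sig0 eps T : R) : R :=
  Rintegral lebesgue_measure `[0, T]
    (fun t => (sigma2 Oms D Sig0 t) ^+ 2 /
       Num.sqrt (eps ^+ 2 / 16 + (sigma2 Oms D Sig0 t) ^+ 2)).

Definition rval (Oms D Sig0 eps T : R) : R :=
  Rintegral lebesgue_measure `[0, T]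
    (fun t => sigma2 Oms D Sig0 t /
       Num.sqrt (eps ^+ 2 / 16 + (sigma2 Oms D Sig0 t) ^+ 2)).

Definition Lloss (Oms : R) (Oma : M) (D Sig0 : R) (m0 : 'cV[R]_d)
    (T eps lam : R) (Dhat Ohat : M) : R :=
  let Om := Oms%:M + Oma in
  let P := Pmat Om m0 T in
  let q := qval Oms D Sig0 eps T in
  let r := rval Oms D Sig0 eps T in
  let S := Ohat + Ohat^T - (2 * Oms)%:M in
  \tr ((Ohat - Om)^T *m (Ohat - Om) *m P
       + (q / 4) *: (S *m S)
       + r *: (S *m (Dhat - D%:M))
       + (lam * T) *: (Ohat *m Ohat^T)).

End Defs.

(* The loss is a quadratic function of Ohat whose purely quadratic part
   tr (Z^T Z P) + q/4 tr ((Z + Z^T)^2) + lam T tr (Z Z^T) is nonnegative, so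
   any point where its gradient
     2 (Ohat - Om) P + q (Ohat + Ohat^T - 2 Oms I) + 2 r (Dhat - D I) + 2 lam T Ohat
   vanishes is a global minimum.  Conjugating by the orthonormal eigenbasis U
   makes P diagonal; the (i,j) and (j,i) entries of the gradient equation then
   form a 2x2 linear system in the coefficients c_ij, c_ji of Om - Ohat, whose
   Cramer solution is the coefficient of the statement. *)

From HB Require Import structures.
From mathcomp Require Import all_boot all_order all_algebra.
From mathcomp Require Import all_classical all_reals all_analysis.
From mathcomp Require Import ring lra.
Set Implicit Arguments. Unset Strict Implicit. Unset Printing Implicit Defensive.
Import Order.TTheory GRing.Theory Num.Theory.
Local Open Scope ring_scope.

Section TraceForms.
Variable R : realFieldType.

Lemma mxtrace_mul_tr m p (A B : 'M[R]_(m, p)) : \tr (A *m B^T) = \tr (B *m A^T).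
Proof. by rewrite -mxtrace_tr trmx_mul trmxK. Qed.

Lemma mxtrace_mul_symmetrize n (S Z : 'M[R]_n) :
  S^T = S -> \tr (S *m (Z + Z^T)) = 2 * \tr (S *m Z^T).
Proof.
move=> symS; rewrite mulmxDr mxtraceD -[\tr (S *m Z)]mxtrace_tr trmx_mul symS.
by rewrite mxtrace_mulC mulr_natl mulr2n.
Qed.

Lemma mxtrace_mul_tr_ge0 m p (A : 'M[R]_(m, p)) : 0 <= \tr (A *m A^T).
Proof.
apply: sumr_ge0 => i _; rewrite !mxE; apply: sumr_ge0 => j _.
by rewrite !mxE -expr2 sqr_ge0.
Qed.

Lemma mxtrace_mul_diag_tr_ge0 m p (B : 'M[R]_(m, p)) (g : 'I_p -> R) :
  (forall i, 0 <= g i) -> 0 <= \tr (B *m diag_mx (\row_i g i) *m B^T).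
Proof.
move=> g_ge0; apply: sumr_ge0 => i _; rewrite !mxE; apply: sumr_ge0 => j _.
by rewrite mul_mx_diag !mxE mulrAC -expr2 mulr_ge0 ?sqr_ge0.
Qed.

Definition psd_mx n (P : 'M[R]_n) := forall Z : 'M[R]_n, 0 <= \tr (Z *m P *m Z^T).

Lemma psd_mx_conj_diag n (U : 'M[R]_n) (g : 'I_n -> R) :
  (forall i, 0 <= g i) -> psd_mx (U *m diag_mx (\row_i g i) *m U^T).
Proof.
move=> g_ge0 Z; rewrite !mulmxA -mulmxA -trmx_mul.
exact: mxtrace_mul_diag_tr_ge0.
Qed.

End TraceForms.

Section QuadraticLoss.
Variables (R : realFieldType) (n : nat) (P Om E : 'M[R]_n) (c q r lt : R).
Hypotheses (symP : P^T = P) (symE : E^T = E).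

(* [Lloss Oms Oma D Sig0 m0 T eps lam Dhat X] unfolds to
   [quad_loss (Pmat Om m0 T) Om (Dhat - D%:M) (2 * Oms) q r (lam * T) X]. *)
Definition quad_loss (X : 'M[R]_n) : R :=
  let S := X + X^T - c%:M in
  \tr ((X - Om)^T *m (X - Om) *m P + (q / 4) *: (S *m S) + r *: (S *m E)
       + lt *: (X *m X^T)).

Definition loss_grad (X : 'M[R]_n) : 'M[R]_n :=
  2 *: ((X - Om) *m P) + q *: (X + X^T - c%:M) + (2 * r) *: E + (2 * lt) *: X.

Lemma mxtrace_quad_formD (A Z : 'M[R]_n) :
  \tr ((A + Z)^T *m (A + Z) *m P)
  = \tr (A^T *m A *m P) + 2 * \tr (A *m P *m Z^T) + \tr (Z^T *m Z *m P).
Proof.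
rewrite [(A + Z)^T]raddfD /= mulmxDl !mulmxDr !mulmxDl !mxtraceD.
have -> : \tr (A^T *m Z *m P) = \tr (A *m P *m Z^T).
  by rewrite -mulmxA mxtrace_mulC mxtrace_mul_tr trmx_mul symP mulmxA.
have -> : \tr (Z^T *m A *m P) = \tr (A *m P *m Z^T).
  by rewrite -mulmxA mxtrace_mulC.
lra.
Qed.

Lemma quad_loss_shift (X Z : 'M[R]_n) :
  quad_loss (X + Z) = quad_loss X + \tr (loss_grad X *m Z^T)
    + (\tr (Z^T *m Z *m P) + q / 4 * \tr ((Z + Z^T) *m (Z + Z^T))
       + lt * \tr (Z *m Z^T)).
Proof.
rewrite /quad_loss; set S := X + X^T - c%:M.
have symS : S^T = S by rewrite /S raddfB /= raddfD /= trmxK tr_scalar_mx [X^T + X]addrC.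
have -> : X + Z + (X + Z)^T - c%:M = S + (Z + Z^T).
  by apply/matrixP => i j; rewrite /S !mxE; lra.
have -> : X + Z - Om = (X - Om) + Z by rewrite addrAC.
have gradZ : \tr (loss_grad X *m Z^T) = 2 * \tr ((X - Om) *m P *m Z^T)
    + q * \tr (S *m Z^T) + 2 * r * \tr (E *m Z^T) + 2 * lt * \tr (X *m Z^T).
  by rewrite /loss_grad -/S 3!mulmxDl -!scalemxAl !mxtraceD !mxtraceZ.
clearbody S.
have sqrSD : \tr ((S + (Z + Z^T)) *m (S + (Z + Z^T)))
    = \tr (S *m S) + 4 * \tr (S *m Z^T) + \tr ((Z + Z^T) *m (Z + Z^T)).
  rewrite mulmxDl [S *m _]mulmxDr [(Z + Z^T) *m _]mulmxDr !mxtraceD.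
  rewrite [\tr ((Z + Z^T) *m S)]mxtrace_mulC mxtrace_mul_symmetrize //; lra.
have mulSDE : \tr ((S + (Z + Z^T)) *m E) = \tr (S *m E) + 2 * \tr (E *m Z^T).
  by rewrite mulmxDl mxtraceD [\tr ((Z + Z^T) *m E)]mxtrace_mulC mxtrace_mul_symmetrize.
have mulXDtr : \tr ((X + Z) *m (X + Z)^T)
    = \tr (X *m X^T) + 2 * \tr (X *m Z^T) + \tr (Z *m Z^T).
  rewrite [(X + Z)^T]raddfD /= mulmxDl !mulmxDr !mxtraceD.
  rewrite [\tr (Z *m X^T)]mxtrace_mul_tr; lra.
rewrite gradZ !mxtraceD !mxtraceZ mxtrace_quad_formD sqrSD mulSDE mulXDtr; lra.
Qed.

Lemma quad_loss_min (X Y : 'M[R]_n) :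
  psd_mx P -> 0 <= q -> 0 <= lt -> loss_grad X = 0 -> quad_loss X <= quad_loss Y.
Proof.
move=> psdP q_ge0 lt_ge0 gradX0.
rewrite -[Y](addrNK X) addrC quad_loss_shift gradX0 mul0mx mxtrace0 addr0 lerDl.
have symZZ : (Y - X + (Y - X)^T)^T = Y - X + (Y - X)^T by rewrite raddfD /= trmxK addrC.
apply: addr_ge0; first apply: addr_ge0.
- by rewrite -mulmxA mxtrace_mulC; apply: psdP.
- by rewrite mulr_ge0 ?divr_ge0 // -{2}symZZ mxtrace_mul_tr_ge0.
- by rewrite mulr_ge0 ?mxtrace_mul_tr_ge0.
Qed.

End QuadraticLoss.

Lemma loss_grad_diag_eq0 (R : realFieldType) (n : nat) (g : 'I_n -> R)
    (W E C : 'M[R]_n) (s q r lt : R) :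
  lt != 0 -> W^T = - W ->
  (forall i j, C i j * (2 * g j + q + 2 * lt) + q * C j i
               = 2 * lt * ((s%:M + (r / lt) *: E) i j + W i j)) ->
  loss_grad (diag_mx (\row_i g i)) (s%:M + W) E (2 * s) q r lt (s%:M + W - C) = 0.
Proof.
move=> lt_neq0 skewW eqC; apply/matrixP => i j.
have Wji : W j i = - W i j by have /matrixP/(_ i j) := skewW; rewrite !mxE.
have := eqC i j; rewrite /loss_grad mul_mx_diag !mxE Wji [j == i]eq_sym.
set rho := r / lt; have -> : r = lt * rho by rewrite mulrC divfK.
by case: (i == j); rewrite ?mulr1n ?mulr0n => ?; lra.
Qed.

Section OrthogonalConjugation.
Variables (R : realFieldType) (n : nat) (U : 'M[R]_n).

Lemma sum_col_outer (f : 'I_n -> 'I_n -> R) :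
  \sum_i \sum_j f i j *: (col i U *m (col j U)^T) = U *m \matrix_(i, j) f i j *m U^T.
Proof.
apply/matrixP => a b; rewrite !mxE summxE.
under eq_bigr => i _ do rewrite summxE.
under [RHS]eq_bigr => k _ do rewrite !mxE mulr_suml.
rewrite exchange_big; apply: eq_bigr => i _; apply: eq_bigr => j _.
by rewrite !mxE big_ord1 !mxE mulrCA mulrA.
Qed.

Lemma sum_col_outer_diag (g : 'I_n -> R) :
  \sum_i g i *: (col i U *m (col i U)^T) = U *m diag_mx (\row_i g i) *m U^T.
Proof.
apply/matrixP => a b; rewrite !mxE summxE; apply: eq_bigr => i _.
by rewrite mul_mx_diag !mxE big_ord1 !mxE mulrCA mulrA.
Qed.

Lemma col_conj_mxE (A : 'M[R]_n) i j :
  ((col i U)^T *m A *m col j U) 0 0 = (U^T *m A *m U) i j.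
Proof.
rewrite !mxE; apply: eq_bigr => k _; rewrite !mxE; congr (_ * _).
by apply: eq_bigr => l _; rewrite !mxE.
Qed.

Lemma conj_mxD (A B : 'M[R]_n) :
  U^T *m (A + B) *m U = U^T *m A *m U + U^T *m B *m U.
Proof. by rewrite mulmxDr mulmxDl. Qed.

Lemma conj_mxN (A : 'M[R]_n) : U^T *m (- A) *m U = - (U^T *m A *m U).
Proof. by rewrite mulmxN mulNmx. Qed.

Lemma conj_mxZ a (A : 'M[R]_n) : U^T *m (a *: A) *m U = a *: (U^T *m A *m U).
Proof. by rewrite -scalemxAr -scalemxAl. Qed.

Lemma conj_trmx (A : 'M[R]_n) : U^T *m A^T *m U = (U^T *m A *m U)^T.
Proof. by rewrite !trmx_mul trmxK mulmxA. Qed.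

Lemma conj_trmxE (A : 'M[R]_n) i j : (U^T *m A^T *m U) i j = (U^T *m A *m U) j i.
Proof. by rewrite conj_trmx mxE. Qed.

Hypothesis orthoU : U^T *m U = 1%:M.

Lemma conj_mxK (C : 'M[R]_n) : U^T *m (U *m C *m U^T) *m U = C.
Proof. by rewrite !mulmxA orthoU mul1mx -mulmxA orthoU mulmx1. Qed.

Lemma conj_scalar_mx a : U^T *m a%:M *m U = a%:M.
Proof. by rewrite mul_mx_scalar -scalemxAl orthoU scalemx1. Qed.

Lemma conj_mxM (A B : 'M[R]_n) :
  U^T *m (A *m B) *m U = (U^T *m A *m U) *m (U^T *m B *m U).
Proof.
rewrite !mulmxA -[U^T *m A *m U *m U^T]mulmxA (mulmx1C orthoU).
by rewrite mulmx1.
Qed.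

Lemma conj_mx_eq0 (A : 'M[R]_n) : U^T *m A *m U = 0 -> A = 0.
Proof.
move=> A0; have UUt : U *m U^T = 1%:M := mulmx1C orthoU.
have -> : A = U *m (U^T *m A *m U) *m U^T.
  by rewrite !mulmxA UUt mul1mx -mulmxA UUt mulmx1.
by rewrite A0 mulmx0 mul0mx.
Qed.

Lemma loss_grad_conj (P Om E X : 'M[R]_n) (c q r lt : R) :
  U^T *m loss_grad P Om E c q r lt X *m U
  = loss_grad (U^T *m P *m U) (U^T *m Om *m U) (U^T *m E *m U) c q r lt
      (U^T *m X *m U).
Proof.
by rewrite /loss_grad !(conj_mxD, conj_mxZ, conj_mxN, conj_mxM, conj_trmx, conj_scalar_mx).
Qed.

Lemma loss_grad_eigen_eq0 (W E C : 'M[R]_n) (g : 'I_n -> R) (s q r lt : R) :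
  W^T = - W -> lt != 0 ->
  (forall i j, C i j * (2 * g j + q + 2 * lt) + q * C j i
     = 2 * lt * ((U^T *m (s%:M + (r / lt) *: E) *m U) i j + (U^T *m W *m U) i j)) ->
  loss_grad (U *m diag_mx (\row_i g i) *m U^T) (s%:M + W) E (2 * s) q r lt
    (s%:M + W - U *m C *m U^T) = 0.
Proof.
move=> skewW lt_neq0 eqC; apply: conj_mx_eq0.
rewrite loss_grad_conj !(conj_mxD, conj_mxN, conj_mxK, conj_scalar_mx).
apply: loss_grad_diag_eq0 => // [|i j]; first by rewrite -conj_trmx skewW conj_mxN.
by rewrite eqC !(conj_mxD, conj_mxZ, conj_scalar_mx).
Qed.

End OrthogonalConjugation.

Definition opt_coef (R : realFieldType) (q lt a b e w : R) : R :=
  (lt * (q + lt)^-1 * e * (1 + a * lt^-1) + w * (1 + a * (q + lt)^-1))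
  / ((q + lt)^-1 * lt^-1 * a * b + (lt^-1 + (q + lt)^-1) / 2 * (a + b) + 1).

Lemma opt_coef_solves (R : realFieldType) (q lt a b e w : R) :
  0 <= q -> 0 < lt -> 0 <= a -> 0 <= b ->
  opt_coef q lt a b e w * (2 * b + q + 2 * lt) + q * opt_coef q lt b a e (- w)
  = 2 * lt * (e + w).
Proof.
move=> q_ge0 lt_gt0 a_ge0 b_ge0; have qlt_gt0 : 0 < q + lt by lra.
have ab_ge0 := mulr_ge0 a_ge0 b_ge0.
have den_gt0 : 0 < (q + lt) * lt + (q + lt + lt) * (a + b) / 2 + a * b.
  by rewrite -addrA ltr_pwDl ?mulr_gt0 // addr_ge0 // divr_ge0 ?mulr_ge0 //; lra.
rewrite /opt_coef; field.
by rewrite !gt_eqF //=; lra.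
Qed.

Theorem mainTheorem2 (R : realType) (n : nat)
  (Oms : R) (Oma : 'M[R]_n.+1) (D Sig0 : R) (m0 : 'cV[R]_n.+1)
  (T eps lam : R) (Dhat : 'M[R]_n.+1)
  (U : 'M[R]_n.+1) (gam : 'I_n.+1 -> R) :
  Oms < 0 -> Oma^T = - Oma -> 0 < D -> 0 < Sig0 -> 0 < T -> 0 <= eps ->
  0 < lam -> Dhat^T = Dhat ->
  (* orthonormal eigenvectors u_i = col i U, eigenvalues gam sorted, >= 0 *)
  U^T *m U = 1%:M ->
  Pmat (Oms%:M + Oma) m0 T = \sum_i gam i *: (col i U *m (col i U)^T) ->
  (forall i j : 'I_n.+1, (i <= j)%N -> gam j <= gam i) ->
  (forall i, 0 <= gam i) ->
  let Om := Oms%:M + Oma in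
  let q := qval Oms D Sig0 eps T in
  let r := rval Oms D Sig0 eps T in
  let lt := lam * T in
  let qt := q + lt in
  let Gp := (lt^-1 + qt^-1) / 2 in
  let omega := fun i j => ((col i U)^T *m Oma *m col j U) 0 0 in
  let eta := fun i j =>
    ((col i U)^T *m (Oms%:M + (r / lt) *: (Dhat - D%:M)) *m col j U) 0 0 in
  let Ohat := Om - \sum_i \sum_j
     ((lt * qt^-1 * eta i j * (1 + gam i * lt^-1) + omega i j * (1 + gam i * qt^-1))
      / (qt^-1 * lt^-1 * gam i * gam j + Gp * (gam i + gam j) + 1))
     *: (col i U *m (col j U)^T) in
  forall X : 'M[R]_n.+1,
    Lloss Oms Oma D Sig0 m0 T eps lam Dhat Ohat
      <= Lloss Oms Oma D Sig0 m0 T eps lam Dhat X.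
Proof.
move=> _ skewOma _ _ T_gt0 _ lam_gt0 symDhat orthoU P_spec _ gam_ge0.
move=> Om q r lt qt Gp omega eta Ohat X.
have q_ge0 : 0 <= q.
  by apply: Rintegral_ge0 => t _; rewrite divr_ge0 ?sqr_ge0 ?sqrtr_ge0.
have lt_gt0 : 0 < lt by rewrite mulr_gt0.
have symE : (Dhat - D%:M)^T = Dhat - D%:M by rewrite raddfB /= symDhat tr_scalar_mx.
have symH : (Oms%:M + (r / lt) *: (Dhat - D%:M))^T = Oms%:M + (r / lt) *: (Dhat - D%:M).
  by rewrite raddfD /= tr_scalar_mx linearZ /= symE.
have omegaE i j : omega i j = (U^T *m Oma *m U) i j := col_conj_mxE U Oma i j.
have etaE i j : eta i j = (U^T *m (Oms%:M + (r / lt) *: (Dhat - D%:M)) *m U) i j.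
  exact: col_conj_mxE.
have omega_skew i j : omega j i = - omega i j.
  by rewrite !omegaE -conj_trmxE skewOma conj_mxN mxE.
have eta_sym i j : eta j i = eta i j by rewrite !etaE -conj_trmxE symH.
rewrite sum_col_outer_diag in P_spec.
apply: quad_loss_min => //; rewrite ?P_spec.
- by rewrite !trmx_mul trmxK tr_diag_mx mulmxA.
- exact: psd_mx_conj_diag.
- exact: ltW.
rewrite /Ohat sum_col_outer; apply: loss_grad_eigen_eq0 => // [|i j].
  by rewrite gt_eqF.
rewrite -etaE -omegaE !mxE (eta_sym i j) (omega_skew i j).
exact: opt_coef_solves.
Qed.
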